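(* Let $M\in S_d^+$, let $\mathcal T$ be an $M$-reduced mesh and $\Lambda$ the associated Hopf–Lax operator. Then the map $D_M:\mathbb Z^d\to\mathbb R_+$, $D_M(z)=\|z\|_M$, is a discrete sub-solution, i.e. $D_M(0)=0$ and $D_M(z)\le\Lambda(D_M,z)$ for all $z\in\mathbb Z^d\setminus\{0\}$.
   Context: $S_d^+$ is the set of $d\times d$ symmetric positive definite matrices; $\langle u,v\rangle_M:=u^TMv$, $\|u\|_M:=\sqrt{\langle u,u\rangle_M}$. An $M$-reduced mesh is a finite conforming mesh $\mathcal T$ of simplices in $\mathbb R^d$ such that: (I) the union of its simplices is a neighborhood of the origin; (II) the vertices of each $T\in\mathcal T$ lie in $\mathbb Z^d$ and $T$ has volume $1/d!$; (III) each $T\in\mathcal T$ has the origin as a vertex, and its other vertices $v_1,\dots,v_d$ satisfy $\langle v_i,v_j\rangle_M\ge0$ for all $i,j$. For $\delta:\mathbb Z^d\to\mathbb R_+\cup\{\infty\}$ and $z\in\mathbb Z^d$, $\Lambda(\delta,z):=\min\{\|\sum_{i=1}^k\alpha_iv_i\|_M+\sum_{i=1}^k\alpha_i\delta(z+v_i)\}$ over $1\le k\le d$, $\alpha_i\ge0$ with $\sum_i\alpha_i=1$, and non-zero vertices $v_1,\dots,v_k$ of a common simplex of $\mathcal T$ (convention $0\times\infty=0$). *)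

From HB Require Import structures.
From mathcomp Require Import all_boot all_order all_algebra.
From mathcomp Require Import all_classical all_reals all_analysis.
Set Implicit Arguments. Unset Strict Implicit. Unset Printing Implicit Defensive.
Import Order.TTheory GRing.Theory Num.Theory.
Import numFieldNormedType.Exports.
Local Open Scope classical_set_scope.
Local Open Scope ring_scope.

Section Defs.
Variables (R : realType) (d : nat).

Definition pt := 'cV[R]_d.

Definition mdot (M : 'M[R]_d) (u v : pt) : R := (u^T *m M *m v) 0 0.
Definition mnorm (M : 'M[R]_d) (u : pt) : R := Num.sqrt (mdot M u u).

Definition sym_pos_def (M : 'M[R]_d) : Prop :=
  M^T = M /\ forall x : pt, x != 0 -> 0 < mdot M x x.

Definition is_lattice (z : pt) : Prop := forall i, z i 0 \is a Num.int.

Definition simplex := {ffun 'I_d.+1 -> pt}.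

(* convex hull of the vertices of T indexed by S (empty if S is empty) *)
Definition hullS (T : simplex) (S : {set 'I_d.+1}) : set pt :=
  [set x | exists lam : 'I_d.+1 -> R,
     [/\ forall i, 0 <= lam i, forall i, i \notin S -> lam i = 0,
         \sum_i lam i = 1 & x = \sum_i lam i *: T i]].

Definition hull (T : simplex) : set pt := hullS T [set: 'I_d.+1]%SET.

Definition svolume (T : simplex) : R :=
  `|\det (\matrix_(i < d, j < d) (T (lift ord0 j) - T ord0) i 0)| / (d`!)%:R.

(* conforming: the intersection of two simplices is a common face (possibly empty) *)
Definition conforming (Ts : seq simplex) : Prop :=
  forall T T', T \in Ts -> T' \in Ts ->
    exists S S' : {set 'I_d.+1},
      hull T `&` hull T' = hullS T S /\ hull T `&` hull T' = hullS T' S'.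

Definition M_reduced_mesh (M : 'M[R]_d) (Ts : seq simplex) : Prop :=
  [/\ conforming Ts,
      nbhs (0 : pt) (\bigcup_(T in [set T | T \in Ts]) hull T),
      (forall T, T \in Ts -> (forall i, is_lattice (T i)) /\ svolume T = 1 / (d`!)%:R) &
      (forall T, T \in Ts -> exists j, T j = 0 /\
          forall i k, i != j -> k != j -> 0 <= mdot M (T i) (T k))].

(* The Hopf-Lax operator Lambda(delta, z): infimum (= min) over nonempty sets of
   k <= d non-zero vertices of a common simplex, and barycentric weights alpha,
   of ||sum alpha_i v_i||_M + sum alpha_i delta(z + v_i), with 0 * +oo = 0 (mul0e). *)
Definition hopf_lax_values (M : 'M[R]_d) (Ts : seq simplex) (delta : pt -> \bar R)
    (z : pt) : set (\bar R) :=
  [set y | exists T, exists I : {set 'I_d.+1}, exists alpha : 'I_d.+1 -> R,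
     [/\ T \in Ts, (#|I| != 0)%N && (#|I| <= d)%N,
         (forall i, i \in I -> T i != 0 /\ 0 <= alpha i),
         \sum_(i in I) alpha i = 1 &
         y = ((mnorm M (\sum_(i in I) alpha i *: T i))%:E
              + \sum_(i in I) ((alpha i)%:E * delta (z + T i)%R))%E]].

Definition hopf_lax (M : 'M[R]_d) (Ts : seq simplex) (delta : pt -> \bar R) (z : pt)
  : \bar R := ereal_inf (hopf_lax_values M Ts delta z).

Definition DM (M : 'M[R]_d) (z : pt) : R := mnorm M z.

End Defs.

(* Writing z = sum_i a_i (z + v_i) - sum_i a_i v_i for barycentric weights a,
   the triangle inequality and homogeneity of the norm |.|_M give
   |z|_M <= |sum_i a_i v_i|_M + sum_i a_i |z + v_i|_M, which is exactly the bound
   on every candidate value of the Hopf-Lax operator.  Only the fact that |.|_M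
   is a norm is used, not the structure of the mesh. *)
From HB Require Import structures.
From mathcomp Require Import all_boot all_order all_algebra.
From mathcomp Require Import all_classical all_reals all_analysis.
From mathcomp Require Import ring lra.
Set Implicit Arguments. Unset Strict Implicit. Unset Printing Implicit Defensive.
Import Order.TTheory GRing.Theory Num.Theory.
Local Open Scope ring_scope.

Section MNorm.
Variables (R : realType) (d : nat) (M : 'M[R]_d).
Hypothesis M_spd : sym_pos_def M.

Lemma mdotE (u v : pt R d) : mdot M u v = \sum_i u i 0 * (M *m v) i 0.
Proof. by rewrite /mdot -mulmxA mxE; apply: eq_bigr => i _; rewrite mxE. Qed.

Lemma mdotC u v : mdot M u v = mdot M v u.
Proof.
rewrite /mdot -[in LHS](trmxK (u^T *m M *m v)) mxE.
by rewrite !trmx_mul trmxK (proj1 M_spd) mulmxA.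
Qed.

Lemma mdotDl u1 u2 v : mdot M (u1 + u2) v = mdot M u1 v + mdot M u2 v.
Proof. by rewrite !mdotE -big_split; apply: eq_bigr => i _; rewrite mxE mulrDl. Qed.

Lemma mdotZl c u v : mdot M (c *: u) v = c * mdot M u v.
Proof. by rewrite !mdotE mulr_sumr; apply: eq_bigr => i _; rewrite mxE mulrA. Qed.

Lemma mdotDr u v1 v2 : mdot M u (v1 + v2) = mdot M u v1 + mdot M u v2.
Proof. by rewrite !(mdotC u) mdotDl. Qed.

Lemma mdotZr c u v : mdot M u (c *: v) = c * mdot M u v.
Proof. by rewrite !(mdotC u) mdotZl. Qed.

Lemma mdot0l v : mdot M 0 v = 0.
Proof. by rewrite -(scale0r 0) mdotZl mul0r. Qed.

Lemma mdot_ge0 x : 0 <= mdot M x x.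
Proof.
have [->|x_neq0] := eqVneq x 0; first by rewrite mdot0l.
exact/ltW/(proj2 M_spd).
Qed.

Lemma mdot_lincomb s t x y :
  mdot M (s *: x + t *: y) (s *: x + t *: y) =
  s ^+ 2 * mdot M x x + 2 * s * t * mdot M x y + t ^+ 2 * mdot M y y.
Proof. by rewrite !mdotDl !mdotDr !mdotZl !mdotZr (mdotC y x); ring. Qed.

Lemma mnorm_ge0 x : 0 <= mnorm M x.
Proof. exact: sqrtr_ge0. Qed.

Lemma mnorm_gt0 x : x != 0 -> 0 < mnorm M x.
Proof. by move=> x_neq0; rewrite sqrtr_gt0 (proj2 M_spd). Qed.

Lemma sqr_mnorm x : mnorm M x ^+ 2 = mdot M x x.
Proof. by rewrite sqr_sqrtr // mdot_ge0. Qed.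

Lemma mnorm0 : mnorm M 0 = 0.
Proof. by rewrite /mnorm mdot0l sqrtr0. Qed.

Lemma mdot_le_mnorm u v : mdot M u v <= mnorm M u * mnorm M v.
Proof.
have [->|u_neq0] := eqVneq u 0; first by rewrite mdot0l mnorm0 mul0r.
have [->|v_neq0] := eqVneq v 0; first by rewrite mdotC mdot0l mnorm0 mulr0.
have := mdot_ge0 (mnorm M v *: u + (- mnorm M u) *: v).
rewrite mdot_lincomb -!sqr_mnorm.
have := mulr_gt0 (mnorm_gt0 u_neq0) (mnorm_gt0 v_neq0).
by nra.
Qed.

Lemma mnormD u v : mnorm M (u + v) <= mnorm M u + mnorm M v.
Proof.
have uv_ge0 : 0 <= mnorm M u + mnorm M v by rewrite addr_ge0 ?mnorm_ge0.
rewrite -(ger0_norm uv_ge0) -sqrtr_sqr {1}/mnorm ler_sqrt ?sqr_ge0 //.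
have := mdot_le_mnorm u v.
rewrite !mdotDl !mdotDr (mdotC v u) -!sqr_mnorm.
by nra.
Qed.

Lemma mnormZ c u : mnorm M (c *: u) = `|c| * mnorm M u.
Proof.
by rewrite /mnorm mdotZl mdotZr mulrA -expr2 sqrtrM ?sqr_ge0 // sqrtr_sqr.
Qed.

Lemma mnormN u : mnorm M (- u) = mnorm M u.
Proof. by rewrite -scaleN1r mnormZ normrN normr1 mul1r. Qed.

Lemma mnorm_sum_le (I : finType) (P : pred I) (a : I -> R) (w : I -> pt R d) :
  (forall i, P i -> 0 <= a i) ->
  mnorm M (\sum_(i | P i) a i *: w i) <= \sum_(i | P i) a i * mnorm M (w i).
Proof.
move=> a_ge0; apply: (big_ind2 (fun x y => mnorm M x <= y)).
- by rewrite mnorm0.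
- by move=> x1 x2 y1 y2 h1 h2; apply: le_trans (mnormD _ _) (lerD h1 h2).
- by move=> i Pi; rewrite mnormZ ger0_norm ?a_ge0.
Qed.

Lemma mnorm_le_barycentric_shift (I : finType) (P : pred I) (a : I -> R)
    (v : I -> pt R d) (z : pt R d) :
  (forall i, P i -> 0 <= a i) -> \sum_(i | P i) a i = 1 ->
  mnorm M z <=
    mnorm M (\sum_(i | P i) a i *: v i) + \sum_(i | P i) a i * mnorm M (z + v i).
Proof.
move=> a_ge0 a_sum1.
have z_split : z = \sum_(i | P i) a i *: (z + v i) - \sum_(i | P i) a i *: v i.
  under eq_bigr do rewrite scalerDr.
  by rewrite big_split /= -scaler_suml a_sum1 scale1r addrK.
rewrite {1}z_split; apply: le_trans (mnormD _ _) _.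
by rewrite mnormN addrC; apply: lerD => //; apply: mnorm_sum_le.
Qed.

End MNorm.

Theorem proposition1p2 (R : realType) (d : nat) (M : 'M[R]_d)
    (Ts : seq (simplex R d)) :
  sym_pos_def M -> M_reduced_mesh M Ts ->
  DM M 0 = 0 /\
  forall z : pt R d, is_lattice z -> z != 0 ->
    ((DM M z)%:E <= hopf_lax M Ts (fun y => (DM M y)%:E) z)%E.
Proof.
move=> M_spd _; split; first exact: mnorm0.
move=> z _ _; apply/ereal_infP => _ [T [I [a [_ _ I_ok a_sum1 ->]]]].
rewrite -(eq_bigr _ (fun i _ => EFinM (a i) (DM M (z + T i)))).
rewrite sumEFin -EFinD lee_fin /DM.
apply: (mnorm_le_barycentric_shift M_spd) a_sum1 => i /I_ok[_ a_ge0].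
exact: a_ge0.
Qed.
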